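(* Let $Z\subset C'\subset P$ be subschemes of the plane $H=\{x=0\}$, where $Z$ is a nonempty zero-dimensional scheme, $I_{C'}=(x,p)$ and $I_P=(x,ph)$ with $p,h\in S$ nonzero homogeneous, $\delta=\deg p$ and $d=2\delta+\deg h$. Let $J\subseteq R$ be a homogeneous ideal admitting the expected residual sequence, i.e. fitting into an exact sequence $$0\to I_{C'}(-1)\xrightarrow{\ \cdot x\ } J\to ph\,I_{Z,H}\to0$$ (equivalently, $(J+xR)/xR=ph\,I_{Z,H}$ and $J:(x)=(x,p)$). Then $J$ is saturated, $J=I_X$ for a one-dimensional closed subscheme $X\subset\mathbb P^3$ of degree $d$ and arithmetic genus $$\binom{d-\delta-1}{2}+\binom{\delta-1}{2}+\delta-\deg Z-1.$$
   Context: $K$ is an algebraically closed field, $R=K[x,y,z,t]$, $S=K[y,z,t]$ identified with $R/xR$, and $H\subset\mathbb P^3_K$ is the plane with ideal $xR$. $I_X$ denotes the saturated homogeneous ideal of a closed subscheme $X$, and $I_{Z,H}\subset S$ is the saturated homogeneous ideal of $Z$ as a subscheme of $H\cong\operatorname{Proj}(S)$. *)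

From HB Require Import structures.
From mathcomp Require Import all_boot all_order all_algebra.
From mathcomp Require Import mpoly.
Set Implicit Arguments. Unset Strict Implicit. Unset Printing Implicit Defensive.
Import GRing.Theory.
Local Open Scope ring_scope.

(* R = K[x,y,z,t] is {mpoly K[4]} with x = 'X_0, y = 'X_1, z = 'X_2, t = 'X_3.
   S = K[y,z,t] is {mpoly K[3]} with y = 'X_0, z = 'X_1, t = 'X_2. *)

Section Defs.
Variables (K : fieldType) (n : nat).
Local Notation P := {mpoly K[n]}.

Definition is_ideal (J : pred P) : Prop :=
  [/\ 0 \in J,
      (forall f g, f \in J -> g \in J -> f + g \in J) &
      (forall r f, f \in J -> r * f \in J)].

Definition is_homog_ideal (J : pred P) : Prop :=
  is_ideal J /\ forall f k, f \in J -> pihomog mdeg k f \in J.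

(* J is saturated: J : m^oo = J, m = (X_0,...,X_{n-1}) the irrelevant ideal.
   (f m^k is generated by the X^m f with |m| = k.) *)
Definition saturated (J : pred P) : Prop :=
  forall f, (exists k, forall m : 'X_{1..n}, mdeg m = k -> 'X_[m] * f \in J) ->
            f \in J.

Definition indep_mod (J : pred P) (d k : nat) : Prop :=
  exists F : 'I_k -> P,
    (forall i, F i \is d.-homog) /\
    forall c : 'I_k -> K, (\sum_(i < k) c i *: F i) \in J -> forall i, c i = 0.

Definition hilb_fun (J : pred P) (d h : nat) : Prop :=
  indep_mod J d h /\ ~ indep_mod J d h.+1.

Definition hilb_poly (J : pred P) (Q : {poly int}) : Prop :=
  exists N, forall d, (N <= d)%N -> exists h : nat, hilb_fun J d h /\ h%:Z = Q.[d%:Z].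
End Defs.

Section Plane.
Variable K : fieldType.
Definition restrH (f : {mpoly K[4]}) : {mpoly K[3]} :=
  f \mPo [tuple 0; 'X_0; 'X_1; 'X_2].
Definition incS (g : {mpoly K[3]}) : {mpoly K[4]} :=
  g \mPo [tuple 'X_1; 'X_2; 'X_3].
End Plane.

(* Everything is read off the residual sequence 0 -> (x,p)(-1) --x--> J -> ph I_{Z,H} -> 0.
   Saturation: if m^k f lies in J, then y^k f|_H and z^k f|_H are multiples of ph, hence so
   is f|_H because y^k and z^k are coprime; as I_{Z,H} is saturated, f|_H lies in ph I_{Z,H},
   so f = f' + x a with f' in J, and the same coprimality argument modulo p puts a in
   (x,p) = J : x, whence f is in J.
   Hilbert polynomial: restriction to H splits dim J_t as dim (ph I_{Z,H})_t + dim (J : x)_{t-1},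
   and the same splitting for (x,p) gives dim (x,p)_s = dim S_{s-delta} + dim R_{s-1}.
   For t >> 0 the first summand is C(t-delta-e+2, 2) - deg Z, and summing binomials gives
   d t + 1 - g. *)

From HB Require Import structures.
From mathcomp Require Import all_boot all_order all_algebra.
From mathcomp Require Import mpoly zify.
From Stdlib Require Import Classical.
Import GRing.Theory.
Local Open Scope ring_scope.
Set Implicit Arguments. Unset Strict Implicit. Unset Printing Implicit Defensive.

Definition lin_closed (K : fieldType) (V : lmodType K) (A : V -> Prop) :=
  [/\ A 0, (forall u v, A u -> A v -> A (u + v)) & (forall c u, A u -> A (c *: u))].

Definition vspace_of (K : fieldType) (V : vectType K) (U : {vspace V}) (A : V -> Prop) :=
  forall v, v \in U <-> A v.

Section PredSubspace.
Variables (K : fieldType) (V W : vectType K).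

Lemma vspace_of_exists (A : V -> Prop) : lin_closed A -> exists U, vspace_of U A.
Proof.
case=> A0 AD AZ.
suff grow k (U : {vspace V}) : (\dim {:V} - \dim U <= k)%N ->
    (forall v, v \in U -> A v) -> exists U, vspace_of U A.
  by apply: (grow _ 0%VS (leqnn _)) => v; rewrite memv0 => /eqP ->.
elim: k U => [|k IHk] U codimU sUA.
  have Uf : U = fullv by apply/eqP; rewrite eqEdim subvf -subn_eq0 -leqn0.
  by exists U => v; split=> [/sUA // | _]; rewrite Uf memvf.
case: (classic (forall v, A v -> v \in U)) => [AU | /not_all_ex_not [v]].
  by exists U => v; split; [exact: sUA | exact: AU].
move=> /(imply_to_and (A v)) [Av vU].
have sUUv : (U <= U + <[v]>)%VS by rewrite addvSl.
have ltUUv : (\dim U < \dim (U + <[v]>))%N.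
  rewrite (ltn_leqif (dimv_leqif_sup sUUv)); apply/negP => /subvP sUvU; apply: vU.
  by apply: sUvU; apply: (subvP (addvSr U _)); rewrite memv_line.
apply: (IHk (U + <[v]>)%VS).
  have := dimvS (subvf (U + <[v]>)%VS); lia.
by move=> _ /memv_addP [u uU [_ /vlineP [c ->] ->]]; apply: AD; [exact: sUA | exact: AZ].
Qed.

Lemma vspace_of_inj (U1 U2 : {vspace V}) A : vspace_of U1 A -> vspace_of U2 A -> U1 = U2.
Proof.
move=> h1 h2; apply/subv_anti/andP; split; apply/subvP => v.
  by move/h1/h2.
by move/h2/h1.
Qed.

Variables (f : {linear V -> W}) (U : {vspace V}) (A : V -> Prop).
Hypothesis UA : vspace_of U A.

Lemma limg_vspace_of :
  vspace_of (linfun f @: U) (fun w => exists v, A v /\ w = f v).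
Proof.
move=> w; split.
  by case/memv_imgP => v /UA Av ->; exists v; rewrite lfunE.
by case=> v [/UA vU ->]; rewrite -lfunE memv_img.
Qed.

Lemma lker_vspace_of : vspace_of (U :&: lker (linfun f)) (fun v => A v /\ f v = 0).
Proof.
move=> v; rewrite memv_cap memv_ker lfunE; split.
  by case/andP => /UA ? /eqP.
by case=> /UA -> ->; rewrite eqxx.
Qed.

Lemma dim_limg_inj : (forall v, A v -> f v = 0 -> v = 0) ->
  \dim (linfun f @: U) = \dim U.
Proof.
move=> finj; apply: limg_dim_eq; apply/eqP; rewrite -subv0; apply/subvP => v.
by move/lker_vspace_of => [Av fv0]; rewrite memv0 (finj v Av fv0).
Qed.

End PredSubspace.

Section IndepMod.
Variables (K : fieldType) (V : vectType K).

Definition indep_modv (A : V -> Prop) k :=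
  exists F : 'I_k -> V,
    forall c : 'I_k -> K, A (\sum_(i < k) c i *: F i) -> forall i, c i = 0.

Lemma indep_modv_codim (U : {vspace V}) A k :
  vspace_of U A -> indep_modv A k <-> (k <= \dim {:V} - \dim U)%N.
Proof.
move=> UA; split=> [[F Findep] | le_k_codim].
  pose X := [tuple F i | i < k].
  have XE (i : 'I_k) : X`_i = F i by rewrite -tnth_nth tnth_mktuple.
  have XU0 : (<<X>> :&: U = 0)%VS.
    apply/eqP; rewrite -subv0; apply/subvP => w /memv_capP [wX wU].
    rewrite memv0 (coord_span wX); apply/eqP/big1 => i _.
    suff -> : coord X i w = 0 by rewrite scale0r.
    apply: Findep (fun i => coord X i w) _ i; apply/UA.
    by under eq_bigr do rewrite -XE; rewrite -coord_span.
  have freeX : free X.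
    apply/freeP => c Xc0; apply: Findep; apply/UA.
    by under eq_bigr do rewrite -XE; rewrite Xc0 rpred0.
  have := dimvS (subvf (<<X>> + U)%VS); rewrite dimv_disjoint_sum //.
  by move: freeX => /eqP ->; rewrite size_tuple; lia.
rewrite -dimv_compl in le_k_codim.
pose X := vbasis U^C; have freeX := basis_free (vbasisP U^C).
exists (fun i => X`_(widen_ord le_k_codim i)) => c /UA sumU i.
have sum0 : \sum_(j < k) c j *: X`_(widen_ord le_k_codim j) = 0.
  apply/eqP; rewrite -memv0 -(capv_compl U) memv_cap sumU /=.
  apply: rpred_sum => j _; rewrite rpredZ // vbasis_mem // mem_nth // size_tuple.
  exact: leq_trans (ltn_ord j) le_k_codim.
have := congr1 (coord X (widen_ord le_k_codim i)) sum0.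
rewrite linear_sum linear0 (bigD1 i) // big1 => [|j ji].
  by rewrite linearZ /= (coord_free (widen_ord le_k_codim i)) // eqxx mulr1 addr0.
by rewrite linearZ /= (coord_free (widen_ord le_k_codim j)) // -[_ == _]/(j == i) (negbTE ji) mulr0.
Qed.

End IndepMod.

Definition homog_closed (K : fieldType) n (A : {mpoly K[n]} -> Prop) :=
  forall f j, A f -> A (pihomog mdeg j f).

Definition homog_dim (K : fieldType) n (A : {mpoly K[n.+1]} -> Prop) t k :=
  exists U : {vspace dhomog n.+1 K t}, vspace_of U (fun v => A (val v)) /\ \dim U = k.

Section HomogDim.
Variables (K : fieldType) (n : nat).
Implicit Types (A B : {mpoly K[n.+1]} -> Prop) (J : pred {mpoly K[n.+1]}).

Lemma dimv_dhomog t : \dim (fullv : {vspace dhomog n.+1 K t}) = 'C(t + n, t).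
Proof. by rewrite dimvf. Qed.

Lemma homog_dim_exists A t : lin_closed A -> exists k, homog_dim A t k.
Proof.
case=> A0 AD AZ.
have [U UA] : exists U, vspace_of U (fun v : dhomog n.+1 K t => A (val v)).
  by apply: vspace_of_exists; split=> // [u v Au Av | c u Au]; [exact: AD | exact: AZ].
by exists (\dim U), U.
Qed.

Lemma homog_dim_ext A B t k :
  homog_dim A t k -> (forall f, A f <-> B f) -> homog_dim B t k.
Proof. by move=> [U [UA dimU]] AB; exists U; split=> // v; rewrite UA AB. Qed.

Lemma homog_dim_full t : homog_dim (fun _ : {mpoly K[n.+1]} => True) t 'C(t + n, t).
Proof. by exists fullv; split; [move=> v; rewrite memvf | rewrite dimv_dhomog]. Qed.

Lemma homog_dim_le A t k : homog_dim A t k -> (k <= 'C(t + n, t))%N.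
Proof. by case=> U [_ <-]; rewrite -dimv_dhomog dimvS ?subvf. Qed.

Lemma indep_mod_dhomog J t k :
  indep_mod J t k <-> indep_modv (fun v : dhomog n.+1 K t => val v \in J) k.
Proof.
split=> [[F [Fhomog Findep]] | [F Findep]].
  by exists (fun i => DHomog (Fhomog i)) => c; rewrite raddf_sum; apply: Findep.
exists (fun i => val (F i)); split=> [i | c Jc]; first exact: dhomog_is_dhomog.
by apply: Findep; rewrite raddf_sum.
Qed.

Lemma hilb_fun_homog_dim J t k h : homog_dim (fun f => f \in J) t k ->
  hilb_fun J t h <-> h = ('C(t + n, t) - k)%N.
Proof.
case=> U [UJ <-]; rewrite /hilb_fun !indep_mod_dhomog !(indep_modv_codim _ UJ).
by rewrite dimv_dhomog; split=> [[le_h /negP]|->]; lia.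
Qed.

End HomogDim.

Section Pihomog.
Variables (K : fieldType) (n : nat).
Implicit Types (c f : {mpoly K[n]}).

Lemma dhomog_mX (m : 'X_{1..n}) : ('X_[m] : {mpoly K[n]}) \is (mdeg m).-homog.
Proof. by rewrite dhomogX. Qed.

Lemma mpoly_linear_ext (V : lmodType K) (F G : {mpoly K[n]} -> V) :
  linear F -> linear G -> (forall m, F 'X_[m] = G 'X_[m]) -> F =1 G.
Proof.
have lin0 (H : {mpoly K[n]} -> V) : linear H -> H 0 = 0.
  move=> linH; have := linH 1 0 0; rewrite scaler0 addr0 scale1r => H0.
  by apply: (@addrI _ (H 0)); rewrite addr0 -H0.
move=> linF linG FG; elim/mpolyind => [|a m f _ _ IHf]; first by rewrite !lin0.
by rewrite linF linG IHf FG.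
Qed.

Lemma pihomog_mul c e f j : c \is e.-homog ->
  pihomog mdeg (e + j) (c * f) = c * pihomog mdeg j f.
Proof.
move=> c_homog; move: f; apply: mpoly_linear_ext => [a f g|a f g|m].
- by rewrite mulrDr -scalerAr linearP.
- by rewrite linearP mulrDr -scalerAr.
have cXm_homog := dhomogM c_homog (dhomog_mX m).
rewrite !pihomogX; case: eqP => [<-|ne_mj]; first by rewrite pihomog_dE.
by rewrite mulr0 (pihomog_ne0 _ cXm_homog) //; apply/eqP => /addnI.
Qed.

Lemma pihomog_mul_lt c e f j : c \is e.-homog -> (j < e)%N ->
  pihomog mdeg j (c * f) = 0.
Proof.
move=> c_homog lt_je; move: f; apply: mpoly_linear_ext => [a f g|a f g|m].
- by rewrite mulrDr -scalerAr linearP.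
- by rewrite scaler0 addr0.
have cXm_homog := dhomogM c_homog (dhomog_mX m).
by rewrite (pihomog_ne0 _ cXm_homog) //; apply: contraTneq lt_je => <-; rewrite -leqNgt leq_addr.
Qed.

Lemma pihomog_mul_dvd c e f j : c \is e.-homog ->
  exists g, pihomog mdeg j (c * f) = c * g.
Proof.
move=> c_homog; case: (leqP e j) => [le_ej | lt_je].
  by exists (pihomog mdeg (j - e) f); rewrite -(pihomog_mul f _ c_homog) subnKC.
by exists 0; rewrite mulr0 (pihomog_mul_lt _ c_homog).
Qed.

End Pihomog.

Section MulDhomog.
Variables (K : fieldType) (n : nat) (c : {mpoly K[n]}) (e t : nat).
Hypothesis c_homog : c \is e.-homog.

Definition mul_dhomog (v : dhomog n K t) : dhomog n K (e + t) :=
  DHomog (dhomogM c_homog (dhomog_is_dhomog v)).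

Lemma mul_dhomog_is_linear : linear mul_dhomog.
Proof. by move=> a u v; apply/val_inj; rewrite /= mulrDr -scalerAr. Qed.

HB.instance Definition _ := GRing.isLinear.Build K (dhomog n K t) (dhomog n K (e + t))
  _ mul_dhomog mul_dhomog_is_linear.

End MulDhomog.

Lemma homog_dim_mul (K : fieldType) n (c : {mpoly K[n.+1]}) e t
    (A B : {mpoly K[n.+1]} -> Prop) (k : nat) :
  c != 0 -> c \is e.-homog -> homog_closed B ->
  (forall f, f \is (e + t).-homog -> A f <-> exists g, B g /\ f = c * g) ->
  homog_dim B t k -> homog_dim A (e + t) k.
Proof.
move=> c0 c_homog homogB Ac [U [UB <-]].
exists (linfun (mul_dhomog c_homog (t := t)) @: U)%VS; split; last first.
  apply: dim_limg_inj UB _ => v _ /(congr1 val) /eqP.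
  by rewrite /= mulf_eq0 (negbTE c0) => /eqP v0; apply: val_inj.
move=> w; rewrite (limg_vspace_of _ UB) (Ac _ (dhomog_is_dhomog w)); split.
  by case=> v [Bv ->]; exists (val v).
case=> g [Bg wg]; exists (DHomog (pihomogP mdeg t g)); split; first exact: homogB.
by apply/val_inj; rewrite /= -(pihomog_mul g t c_homog) -wg (pihomog_dE (dhomog_is_dhomog w)).
Qed.

Section Restr.
Variables (K : fieldType) (n : nat).

(* restr sets x_0 = 0, i.e. restricts to the hyperplane H = {x_0 = 0}; incl is the inclusion
   K[x_1, ..., x_n] -> K[x_0, ..., x_n]. *)
Definition restr_tuple : n.+1.-tuple {mpoly K[n]} :=
  [tuple if unlift ord0 i is Some j then 'X_j else 0 | i < n.+1].
Definition restr : {mpoly K[n.+1]} -> {mpoly K[n]} := comp_mpoly restr_tuple.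
HB.instance Definition _ := GRing.Linear.on restr.
HB.instance Definition _ := GRing.RMorphism.on restr.

Definition incl_tuple : n.-tuple {mpoly K[n.+1]} := [tuple 'X_(lift ord0 i) | i < n].
Definition incl : {mpoly K[n]} -> {mpoly K[n.+1]} := comp_mpoly incl_tuple.
HB.instance Definition _ := GRing.Linear.on incl.
HB.instance Definition _ := GRing.RMorphism.on incl.

Definition mnm_tail (m : 'X_{1..n.+1}) : 'X_{1..n} := [multinom m (lift ord0 i) | i < n].
Definition mnm_cons0 (m : 'X_{1..n}) : 'X_{1..n.+1} :=
  [multinom (if unlift ord0 i is Some j then m j else 0%N) | i < n.+1].

Lemma mdeg_tail (m : 'X_{1..n.+1}) : mdeg m = (m ord0 + mdeg (mnm_tail m))%N.
Proof. by rewrite !mdegE big_ord_recl; congr (_ + _)%N; apply: eq_bigr => i _; rewrite mnmE. Qed.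

Lemma cons0_ord0 (m : 'X_{1..n}) : mnm_cons0 m ord0 = 0%N.
Proof. by rewrite mnmE unlift_none. Qed.

Lemma tail_cons0 (m : 'X_{1..n}) : mnm_tail (mnm_cons0 m) = m.
Proof. by apply/mnmP => i; rewrite !mnmE liftK. Qed.

Lemma cons0_tail (m : 'X_{1..n.+1}) : m ord0 = 0%N -> mnm_cons0 (mnm_tail m) = m.
Proof.
by move=> m0; apply/mnmP => i; rewrite mnmE; case: (unliftP ord0 i) => [j ->|->]; rewrite ?mnmE.
Qed.

Lemma mdeg_cons0 (m : 'X_{1..n}) : mdeg (mnm_cons0 m) = mdeg m.
Proof. by rewrite mdeg_tail cons0_ord0 tail_cons0. Qed.

Lemma restrX (m : 'X_{1..n.+1}) :
  restr 'X_[m] = if m ord0 == 0%N then 'X_[mnm_tail m] else 0.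
Proof.
rewrite /restr comp_mpolyX big_ord_recl tnth_mktuple unlift_none expr0n.
have -> : \prod_(i < n) tnth restr_tuple (lift ord0 i) ^+ m (lift ord0 i) = 'X_[mnm_tail m].
  by rewrite (mpolyXE_id _ (mnm_tail m)); apply: eq_bigr => i _; rewrite tnth_mktuple liftK mnmE.
by case: eqP; rewrite ?mul1r ?mul0r.
Qed.

Lemma inclX (m : 'X_{1..n}) : incl 'X_[m] = 'X_[mnm_cons0 m].
Proof.
rewrite /incl comp_mpolyX (mpolyXE_id _ (mnm_cons0 m)) big_ord_recl cons0_ord0 expr0 mul1r.
by apply: eq_bigr => i _; rewrite tnth_mktuple mnmE liftK.
Qed.

Lemma restrX0 : restr 'X_ord0 = 0.
Proof. by rewrite restrX mnm1E eqxx. Qed.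

Lemma restrX_lift (i : 'I_n) : restr 'X_(lift ord0 i) = 'X_i.
Proof.
rewrite restrX mnm1E [lift _ _ == _]eq_sym (negbTE (neq_lift _ _)) eqxx; congr 'X_[_].
by apply/mnmP => j; rewrite !mnmE (inj_eq lift_inj) eq_sym.
Qed.

Lemma inclK : cancel incl restr.
Proof.
apply: mpoly_linear_ext => [a f g|//|m]; first by rewrite !linearP.
by rewrite inclX restrX cons0_ord0 eqxx tail_cons0.
Qed.

Lemma restrX_cons0 (m : 'X_{1..n}) (f : {mpoly K[n.+1]}) :
  restr ('X_[mnm_cons0 m] * f) = 'X_[m] * restr f.
Proof. by rewrite rmorphM /= restrX cons0_ord0 eqxx tail_cons0. Qed.

Lemma mpoly_X0_decomp f : exists g, f = 'X_ord0 * g + incl (restr f).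
Proof.
elim/mpolyind: f => [|a m f _ _ [g fg]]; first by exists 0; rewrite mulr0 !raddf0 add0r.
have [h Xmh] : exists h, 'X_[m] = 'X_ord0 * h + incl (restr 'X_[m]).
  rewrite restrX; case: eqP => [m0|/eqP m0].
    by exists 0; rewrite mulr0 add0r inclX cons0_tail.
  exists 'X_[m - U_(ord0)]; rewrite raddf0 addr0 -mpolyXD; congr 'X_[_].
  by apply/mnmP => i; rewrite mnmDE mnmBE mnm1E; case: eqP => [<-|]; rewrite ?add0n ?subn0 //; lia.
exists (a *: h + g); rewrite !linearP /= {1}Xmh {1}fg mulrDr scalerDr -scalerAr.
by rewrite addrACA.
Qed.

Lemma restr_eq0 f : restr f = 0 -> exists g, f = 'X_ord0 * g.
Proof. by move=> f0; have [g fg] := mpoly_X0_decomp f; exists g; rewrite {1}fg f0 raddf0 addr0. Qed.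

Lemma restr_pihomog j f : restr (pihomog mdeg j f) = pihomog mdeg j (restr f).
Proof.
move: f; apply: mpoly_linear_ext => [a f g|a f g|m]; rewrite ?linearP //.
rewrite pihomogX (fun_if restr) raddf0 restrX -[_ == j]/(mdeg m == j)%N mdeg_tail.
by case: (m ord0 =P 0%N) => [->|_]; rewrite ?pihomogX ?pihomog0 //; case: ifP.
Qed.

Lemma incl_pihomog j g : incl (pihomog mdeg j g) = pihomog mdeg j (incl g).
Proof.
move: g; apply: mpoly_linear_ext => [a f g|a f g|m]; rewrite ?linearP //.
rewrite pihomogX inclX pihomogX /= mdeg_cons0.
by case: ifP; rewrite ?raddf0 ?inclX.
Qed.

Lemma restr_homog d f : f \is d.-homog -> restr f \is d.-homog.
Proof. by rewrite !homog_piE => /eqP fd; rewrite -restr_pihomog fd. Qed.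

Lemma incl_homog d g : g \is d.-homog -> incl g \is d.-homog.
Proof. by rewrite !homog_piE => /eqP gd; rewrite -incl_pihomog gd. Qed.

End Restr.

Section RestrDhomog.
Variables (K : fieldType) (n t : nat).

Definition restr_dhomog (v : dhomog n.+1 K t) : dhomog n K t :=
  DHomog (restr_homog (dhomog_is_dhomog v)).

Lemma restr_dhomog_is_linear : linear restr_dhomog.
Proof. by move=> a u v; apply/val_inj; rewrite /= linearP. Qed.

HB.instance Definition _ := GRing.isLinear.Build K (dhomog n.+1 K t) (dhomog n K t)
  _ restr_dhomog restr_dhomog_is_linear.

End RestrDhomog.

Lemma mpolyX_neq0 (K : fieldType) n (m : 'X_{1..n}) : ('X_[m] : {mpoly K[n]}) != 0.
Proof. by rewrite -msize_poly_eq0 msizeX. Qed.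

Lemma X0_homog (K : fieldType) n : ('X_ord0 : {mpoly K[n.+1]}) \is 1.-homog.
Proof. by rewrite dhomogX /= mdeg1. Qed.

Lemma homog_dim_split (K : fieldType) n (A : {mpoly K[n.+2]} -> Prop) t (k1 k2 : nat) :
  lin_closed A -> homog_closed A ->
  homog_dim (fun g => exists f, A f /\ restr f = g) (1 + t) k1 ->
  homog_dim (fun g => A ('X_ord0 * g)) t k2 ->
  homog_dim A (1 + t) (k2 + k1).
Proof.
move=> linA homogA [U1 [U1A <-]] [U2 [U2A <-]].
have [_ [U [UA _]]] := homog_dim_exists (1 + t) linA.
exists U; split=> //.
pose rho := @restr_dhomog K n.+1 (1 + t).
pose mulX := mul_dhomog (X0_homog K n.+1) (t := t).
rewrite -(limg_ker_dim (linfun rho) U); congr (_ + _)%N.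
  have kerE : (U :&: lker (linfun rho))%VS = (linfun mulX @: U2)%VS.
    apply: vspace_of_inj (lker_vspace_of _ UA) _ => w.
    split=> [/(limg_vspace_of _ U2A w) [v [Av ->]] | [Aw]].
      by split=> //; apply/val_inj; rewrite /= rmorphM /= restrX0 mul0r.
    move=> /(congr1 val) /restr_eq0 [g wg]; apply/(limg_vspace_of _ U2A w).
    have Xg : 'X_ord0 * pihomog mdeg t g = val w.
      by rewrite -(pihomog_mul g t (X0_homog K n.+1)) -wg (pihomog_dE (dhomog_is_dhomog w)).
    by exists (DHomog (pihomogP mdeg t g)); split; [rewrite /= Xg | apply/val_inj].
  rewrite kerE; apply: dim_limg_inj U2A _ => v _ /(congr1 val) /eqP.
  by rewrite /= mulf_eq0 (negbTE (mpolyX_neq0 _ _)) => /eqP v0; apply: val_inj.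
congr (\dim _); apply: vspace_of_inj (limg_vspace_of _ UA) _ => w.
rewrite U1A; split=> [[f [Af fw]] | [v [Av ->]]]; last by exists (val v).
exists (DHomog (pihomogP mdeg (1 + t) f)); split; first exact: homogA.
by apply/val_inj; rewrite /= restr_pihomog fw (pihomog_dE (dhomog_is_dhomog w)).
Qed.

Section X0Prime.
Variables (K : fieldType) (n : nat).

Lemma X0_dvd_mul (c f g : {mpoly K[n.+1]}) k : restr c != 0 ->
  c * f = 'X_ord0 ^+ k * g -> exists h, f = 'X_ord0 ^+ k * h /\ c * h = g.
Proof.
move=> c_X0; elim: k f g => [|k IHk] f g.
  by rewrite expr0 mul1r => cfg; exists f; rewrite mul1r.
rewrite exprS -mulrA => cfg.
have [f1 ff1] : exists f1, f = 'X_ord0 * f1.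
  apply: restr_eq0; have /eqP : restr c * restr f = 0.
    by rewrite -rmorphM cfg rmorphM /= restrX0 mul0r.
  by rewrite mulf_eq0 (negbTE c_X0) => /eqP.
have /IHk [h [f1h ch]] : c * f1 = 'X_ord0 ^+ k * g.
  by apply: (mulfI (mpolyX_neq0 K U_(ord0))); rewrite mulrCA -ff1 cfg.
by exists h; rewrite ff1 f1h mulrA -exprS.
Qed.

Lemma X0_factor (c : {mpoly K[n.+1]}) : c != 0 ->
  exists j c', c = 'X_ord0 ^+ j * c' /\ restr c' != 0.
Proof.
move: {2}(msize c) (leqnn (msize c)) => N; elim: N c => [|N IHN] c szc c0.
  by move: szc; rewrite leqn0 msize_poly_eq0 (negbTE c0).
have [c_X0 | c_X0] := eqVneq (restr c) 0; last by exists 0%N, c; rewrite expr0 mul1r.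
have [a ca] := restr_eq0 c_X0.
have a0 : a != 0 by apply: contraNneq c0 => a0; rewrite ca a0 mulr0.
have /IHN [//|j [c' [ac' c'_X0]]] : (msize a <= N)%N.
  by move: szc; rewrite ca msizeM ?mpolyX_neq0 // msizeX mdeg1.
by exists j.+1, c'; rewrite ca ac' exprS mulrA.
Qed.

End X0Prime.

Lemma dvd_of_dvd_mulX0n_X1n (K : fieldType) n (c r g1 g2 : {mpoly K[n.+2]}) k : c != 0 ->
  'X_ord0 ^+ k * r = c * g1 -> 'X_(lift ord0 ord0) ^+ k * r = c * g2 ->
  exists h, r = c * h.
Proof.
(* x_0 is prime: split off the x_0-part of c, then divide twice. *)
move=> c0 X0r X1r; have [j [c' [cc' c'_X0]]] := X0_factor c0.
have [h [_ c'h]] : exists h, 'X_ord0 ^+ j * g1 = 'X_ord0 ^+ k * h /\ c' * h = r.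
  by apply: X0_dvd_mul => //; rewrite mulrA [c' * _]mulrC -cc' X0r.
have c'0 : c' != 0 by apply: contraNneq c'_X0 => ->; rewrite raddf0.
have X1h : 'X_(lift ord0 ord0) ^+ k * h = 'X_ord0 ^+ j * g2.
  by apply: (mulfI c'0); rewrite mulrCA c'h X1r cc' -mulrA mulrCA.
have [|h' [hh' _]] := X0_dvd_mul _ X1h.
  by rewrite rmorphXn /= restrX_lift expf_neq0 ?mpolyX_neq0.
by exists h'; rewrite -c'h hh' cc' mulrCA mulrA.
Qed.

Lemma dvd_of_dvd_monomial_mul (K : fieldType) n (c r : {mpoly K[n.+2]}) k : c != 0 ->
  (forall m : 'X_{1..n.+2}, mdeg m = k -> exists g, 'X_[m] * r = c * g) ->
  exists h, r = c * h.
Proof.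
move=> c0 cXr; have cXnr i : exists g, 'X_i ^+ k * r = c * g.
  by rewrite mpolyXn; apply: cXr; rewrite mdegMn mdeg1 mul1n.
have [g1 X0r] := cXnr ord0; have [g2 X1r] := cXnr (lift ord0 ord0).
exact: dvd_of_dvd_mulX0n_X1n c0 X0r X1r.
Qed.

Lemma ideal_lin_closed (K : fieldType) n (I : pred {mpoly K[n]}) :
  is_ideal I -> lin_closed (fun f => f \in I).
Proof. by case=> I0 ID IM; split=> // c f If; rewrite -mul_mpolyC IM. Qed.

Section X0pIdeal.
Variables (K : fieldType) (n : nat) (p : {mpoly K[n.+1]}).

Definition X0_p_ideal (f : {mpoly K[n.+2]}) := exists a b, f = 'X_ord0 * a + incl p * b.

Lemma X0_p_ideal_lin_closed : lin_closed X0_p_ideal.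
Proof.
split=> [|_ _ [a1 [b1 ->]] [a2 [b2 ->]] | c _ [a [b ->]]].
- by exists 0, 0; rewrite !mulr0 addr0.
- by exists (a1 + a2), (b1 + b2); rewrite !mulrDr addrACA.
- by exists (c *: a), (c *: b); rewrite scalerDr -!scalerAr.
Qed.

Lemma X0_p_ideal_homog_closed d : p \is d.-homog -> homog_closed X0_p_ideal.
Proof.
move=> p_homog f j [a [b ->]]; rewrite pihomogD.
have [a' ->] := pihomog_mul_dvd a j (X0_homog K n.+1).
have [b' ->] := pihomog_mul_dvd b j (incl_homog p_homog).
by exists a', b'.
Qed.

Lemma X0_p_ideal_homog_dim dl1 s : p != 0 -> p \is dl1.+1.-homog ->
  homog_dim X0_p_ideal (dl1 + s).+1 ('C(dl1 + s + n.+1, dl1 + s) + 'C(s + n, s))%N.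
Proof.
move=> p0 p_homog; apply: homog_dim_split.
- exact: X0_p_ideal_lin_closed.
- exact: X0_p_ideal_homog_closed p_homog.
- apply: (@homog_dim_mul _ _ p dl1.+1 s _ (fun _ => True) _ p0 p_homog) => // [f _|].
    split=> [[_ [[a [b ->]] <-]] | [g [_ ->]]].
      exists (restr b); split=> //.
      by rewrite raddfD /= !rmorphM /= restrX0 mul0r add0r inclK.
    exists (incl p * incl g); split; last by rewrite rmorphM /= !inclK.
    by exists 0, (incl g); rewrite mulr0 add0r.
  exact: homog_dim_full.
- apply: homog_dim_ext (homog_dim_full _ _ _) _ => g; split=> // _.
  by exists g, 0; rewrite mulr0 addr0.
Qed.

End X0pIdeal.

Section Residual.
Variables (K : fieldType) (n : nat).
Variables (IZ : pred {mpoly K[n.+2]}) (J : pred {mpoly K[n.+3]}) (p h : {mpoly K[n.+2]}).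
Hypotheses (p0 : p != 0) (h0 : h != 0).
Hypotheses (IZ_ideal : is_homog_ideal IZ) (J_ideal : is_homog_ideal J).
Hypothesis restr_J : forall g,
  (exists f, f \in J /\ restr f = g) <-> (exists q, q \in IZ /\ g = p * h * q).
Hypothesis colon_J : forall f, 'X_ord0 * f \in J <-> X0_p_ideal p f.

Let ph0 : p * h != 0. Proof. exact: mulf_neq0. Qed.

Lemma residual_saturated : saturated IZ -> saturated J.
Proof.
move=> IZ_sat f [k mf_J]; case: J_ideal => [[_ JD JM] _].
have mrf mu : mdeg mu = k -> exists q, q \in IZ /\ 'X_[mu] * restr f = p * h * q.
  move=> mu_k; apply/restr_J; exists ('X_[mnm_cons0 mu] * f); split; last exact: restrX_cons0.
  by apply: mf_J; rewrite mdeg_cons0.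
have [r fr] : exists r, restr f = p * h * r.
  by apply: dvd_of_dvd_monomial_mul ph0 _ => mu /mrf [q [_ ->]]; exists q.
have r_IZ : r \in IZ.
  apply: IZ_sat; exists k => mu /mrf [q [q_IZ]].
  by rewrite fr mulrCA => /(mulfI ph0) ->.
have [f' [f'_J f'f]] : exists f', f' \in J /\ restr f' = restr f by apply/restr_J; exists r.
have [a fa] : exists a, f - f' = 'X_ord0 * a by apply: restr_eq0; rewrite raddfB /= f'f subrr.
suff /colon_J : X0_p_ideal p a by rewrite -fa => /JD /(_ f'_J); rewrite subrK.
have [w aw] : exists w, restr a = p * w.
  apply: (dvd_of_dvd_monomial_mul (k := k)) p0 _ => mu mu_k.
  have /colon_J [a1 [b1 Xa]] : 'X_ord0 * ('X_[mnm_cons0 mu] * a) \in J.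
    rewrite mulrCA -fa mulrBr -mulNr; apply: JD; last exact: JM.
    by apply: mf_J; rewrite mdeg_cons0.
  exists (restr b1); rewrite -restrX_cons0 Xa.
  by rewrite raddfD /= !rmorphM /= restrX0 mul0r add0r inclK.
have [u au] : exists u, a - incl p * incl w = 'X_ord0 * u.
  by apply: restr_eq0; rewrite raddfB /= rmorphM /= !inclK aw subrr.
by exists u, (incl w); rewrite -au subrK.
Qed.

Lemma residual_homog_dim dl1 e a1 (kZ : nat) : p \is dl1.+1.-homog -> h \is e.-homog ->
  homog_dim (fun q => q \in IZ) a1.+1 kZ ->
  homog_dim (fun f => f \in J) (dl1 + e + a1).+2
    ('C(dl1 + e + a1 + n.+2, dl1 + e + a1) + 'C(e + a1 + n.+1, e + a1) + kZ)%N.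
Proof.
move=> p_homog h_homog IZ_dim.
have restrJ_dim : homog_dim (fun g => exists f, f \in J /\ restr f = g) (dl1.+1 + e + a1.+1) kZ.
  apply: homog_dim_mul ph0 (dhomogM p_homog h_homog) _ _ IZ_dim => [q j|f _].
    exact: IZ_ideal.2.
  exact: restr_J.
have colonJ_dim : homog_dim (fun g => 'X_ord0 * g \in J) (dl1 + e + a1).+1
    ('C(dl1 + e + a1 + n.+2, dl1 + e + a1) + 'C(e + a1 + n.+1, e + a1))%N.
  have := X0_p_ideal_homog_dim (e + a1) p0 p_homog; rewrite !addnA => X0p_dim.
  by apply: homog_dim_ext X0p_dim _ => g; rewrite colon_J.
rewrite (_ : dl1.+1 + e + a1.+1 = 1 + (dl1 + e + a1).+1)%N in restrJ_dim; last by lia.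
exact: homog_dim_split (ideal_lin_closed J_ideal.1) J_ideal.2 restrJ_dim colonJ_dim.
Qed.

End Residual.

Lemma bin2_mul2 m : (2 * 'C(m, 2) + m = m * m)%N.
Proof. by rewrite -mul_bin_diag bin1; case: m => //= m; rewrite -mulnSr. Qed.

Lemma bin3_mul6 m : (6 * 'C(m.+2, 3) = m.+2 * m.+1 * m)%N.
Proof. by rewrite mulnC -[6%N]/(3`!) bin_ffact !ffactnS ffactn0 muln1 mulnA. Qed.

Lemma binD_sym m k : 'C(m + k, m) = 'C(m + k, k).
Proof. by rewrite -bin_sub ?leq_addr // addKn. Qed.

Lemma residual_genus_arith (dl1 e a1 kZ : nat) :
  let x := (dl1 + e + a1)%N in
  (kZ <= 'C(a1.+1 + 2, a1.+1))%N ->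
  ('C(x + 3, x) + 'C(e + a1 + 2, e + a1) + kZ <= 'C(x.+2 + 3, x.+2))%N ->
  (('C(x.+2 + 3, x.+2) - ('C(x + 3, x) + 'C(e + a1 + 2, e + a1) + kZ))%N)%:Z =
  (2 * dl1.+1 + e)%N%:Z * x.+2%:Z
    + (1 - (('C(dl1 + e, 2) + 'C(dl1, 2) + dl1.+1)%N%:Z - ('C(a1.+1 + 2, a1.+1) - kZ)%N%:Z - 1)).
Proof.
move=> x le_kZ le_kJ; rewrite !binD_sym in le_kZ le_kJ *.
have := bin3_mul6 x.+3; have := bin3_mul6 x.+1.
have := bin2_mul2 (e + a1 + 2); have := bin2_mul2 (dl1 + e); have := bin2_mul2 dl1.
have := bin2_mul2 (a1.+1 + 2).
move: le_kZ le_kJ; rewrite /x !addn2 !addn3 /=; lia.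
Qed.

Lemma homog0_mpolyC (K : fieldType) n (p : {mpoly K[n]}) : p \is 0.-homog -> p = (p@_0)%:MP.
Proof.
move=> p_homog; apply/mpolyP => m; rewrite mcoeffC.
have [->|m0] := eqVneq m 0%MM; first by rewrite ?eqxx mulr1.
rewrite mulr0 (dhomog_nemf_coeff p_homog) //.
by rewrite -[_ != 0%N]/(mdeg m != 0%N) mdeg_eq0.
Qed.

Lemma hilb_poly_unit_ideal (K : fieldType) n (I : pred {mpoly K[n]}) (c : K) k :
  is_ideal I -> c != 0 -> c%:MP \in I -> hilb_poly I (k%:Z)%:P -> k = 0%N.
Proof.
case=> _ _ IM c0 cI [N /(_ N (leqnn N)) [k' [[[F [_ Findep]] _] k'k]]].
move: k'k; rewrite hornerC => /eqP; rewrite eqz_nat => /eqP k'E; subst k'.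
case: k F Findep => // k F Findep.
have I_all f : f \in I.
  have -> : f = (c^-1 *: f) * c%:MP by rewrite mulrC mul_mpolyC scalerA mulfV // scale1r.
  exact: IM.
have /eqP := Findep (fun _ => 1) (I_all _) ord0; by rewrite oner_eq0.
Qed.

Lemma homog_deg_gt0 (K : fieldType) n (I : pred {mpoly K[n]}) (p : {mpoly K[n]}) d k :
  is_ideal I -> hilb_poly I (k%:Z)%:P -> (0 < k)%N ->
  p != 0 -> p \is d.-homog -> p \in I -> (0 < d)%N.
Proof.
move=> I_ideal I_hilb k_gt0 p0; case: d => // p_homog pI.
have p_const := homog0_mpolyC p_homog.
have pc0 : p@_0 != 0 by apply: contraNneq p0 => pc0; rewrite p_const pc0.
have := hilb_poly_unit_ideal I_ideal pc0 _ I_hilb; rewrite -p_const => /(_ pI) k0.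
by rewrite k0 in k_gt0.
Qed.

Lemma restr_tuple3E (K : fieldType) : restr_tuple K 3 = [tuple 0; 'X_0; 'X_1; 'X_2].
Proof.
apply: eq_from_tnth => i; rewrite tnth_mktuple (tnth_nth 0).
case: (unliftP ord0 i) => [j ->|->]; last by rewrite ?unlift_none.
by case: j => [[|[|[|?]]] lt_j3] //=; congr 'X_[U_(_)]; apply: val_inj.
Qed.

Lemma restrHE (K : fieldType) : @restrH K = @restr K 3.
Proof. by rewrite /restrH /restr restr_tuple3E. Qed.

Lemma incl_tuple3E (K : fieldType) : incl_tuple K 3 = [tuple 'X_1; 'X_2; 'X_3].
Proof.
apply: eq_from_tnth => i; rewrite tnth_mktuple (tnth_nth 0).
by case: i => [[|[|[|?]]] lt_i3] //; congr 'X_[U_(_)]; apply: val_inj.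
Qed.

Lemma incSE (K : fieldType) : @incS K = @incl K 3.
Proof. by rewrite /incS /incl incl_tuple3E. Qed.

Lemma X0E (K : fieldType) : ('X_0 : {mpoly K[4]}) = 'X_ord0.
Proof. by congr 'X_[U_(_)]; apply: val_inj. Qed.

Lemma residual_hilb_poly (K : fieldType) (IZ : pred {mpoly K[3]}) (J : pred {mpoly K[4]})
    (p h : {mpoly K[3]}) (delta e degZ : nat) :
  p != 0 -> h != 0 -> is_homog_ideal IZ -> is_homog_ideal J ->
  (forall g, (exists f, f \in J /\ restr f = g) <-> (exists q, q \in IZ /\ g = p * h * q)) ->
  (forall f, 'X_ord0 * f \in J <-> X0_p_ideal p f) ->
  p \is delta.-homog -> h \is e.-homog -> (0 < delta)%N -> hilb_poly IZ (degZ%:Z)%:P ->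
  let d := (2 * delta + e)%N in
  let g := ('C(d - delta - 1, 2) + 'C(delta - 1, 2) + delta)%:Z - degZ%:Z - 1 in
  hilb_poly J (d%:Z *: 'X + (1 - g)%:P).
Proof.
move=> p0 h0 IZ_ideal J_ideal restr_J colon_J + h_homog + [N IZ_hilb] d g.
case: delta @d @g => // dl1 d g p_homog _.
(* In degree T = (dl1 + 1) + e + (a1 + 1), J restricts to p h (I_{Z,H})_(a1 + 1). *)
exists (N + dl1 + e + 2)%N => T le_T.
have [a1 Ta] : exists a1, T = (dl1 + e + a1).+2 by exists (T - (dl1 + e + 2))%N; lia.
subst T.
have [kZ IZ_dim] := homog_dim_exists a1.+1 (ideal_lin_closed IZ_ideal.1).
have degZE : degZ = ('C(a1.+1 + 2, a1.+1) - kZ)%N.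
  have [h' [/(hilb_fun_homog_dim _ IZ_dim) ->]] := IZ_hilb a1.+1 ltac:(lia).
  by rewrite hornerC => /eqP; rewrite eqz_nat eq_sym => /eqP.
have J_dim := residual_homog_dim p0 h0 IZ_ideal J_ideal restr_J colon_J p_homog h_homog IZ_dim.
eexists; split; first exact/(hilb_fun_homog_dim _ J_dim).
rewrite hornerD hornerZ hornerX hornerC /g /d degZE subSS subn0.
have -> : (2 * dl1.+1 + e - dl1.+1 - 1 = dl1 + e)%N by lia.
by apply: residual_genus_arith; [exact: homog_dim_le IZ_dim | exact: homog_dim_le J_dim].
Qed.

Unset Implicit Arguments.

Theorem lemma3p2 (K : closedFieldType)
  (IZ : pred {mpoly K[3]}) (degZ : nat)
  (p h : {mpoly K[3]}) (delta e : nat)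
  (J : pred {mpoly K[4]}) :
  (* Z : nonempty zero-dimensional subscheme of H with saturated ideal IZ, deg Z = degZ *)
  is_homog_ideal IZ -> saturated IZ -> hilb_poly IZ (degZ%:Z)%:P -> (0 < degZ)%N ->
  (* p, h nonzero homogeneous of degrees delta and e *)
  p != 0 -> p \is delta.-homog -> h != 0 -> h \is e.-homog ->
  (* Z is contained in C' = V(x,p) (hence in P = V(x,ph)) *)
  p \in IZ ->
  (* J homogeneous ideal with (J + xR)/xR = ph I_{Z,H} *)
  is_homog_ideal J ->
  (forall g : {mpoly K[3]},
     (exists f, f \in J /\ restrH f = g) <-> (exists q, q \in IZ /\ g = p * h * q)) ->
  (* J : (x) = (x, p) *)
  (forall f : {mpoly K[4]},
     'X_0 * f \in J <-> exists a b, f = 'X_0 * a + incS p * b) ->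
  let d := (2 * delta + e)%N in
  let g := ('C(d - delta - 1, 2) + 'C(delta - 1, 2) + delta)%:Z - degZ%:Z - 1 in
  saturated J /\ hilb_poly J (d%:Z *: 'X + (1 - g)%:P).
Proof.
move=> IZ_ideal IZ_sat IZ_hilb degZ_gt0 p0 p_homog h0 h_homog p_IZ J_ideal restr_J colon_J d g.
rewrite restrHE in restr_J; rewrite incSE X0E in colon_J.
have delta_gt0 := homog_deg_gt0 IZ_ideal.1 IZ_hilb degZ_gt0 p0 p_homog p_IZ.
split; first exact: residual_saturated p0 h0 J_ideal restr_J colon_J IZ_sat.
exact: residual_hilb_poly p0 h0 IZ_ideal J_ideal restr_J colon_J p_homog h_homog
  delta_gt0 IZ_hilb.
Qed.
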